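(* Let $C_1,\dots,C_M$ be linear codes of length $n$ over $\mathbb{F}_q$, let $A=(a_{i,j})$ be an $M\times N$ ($M\le N$) upper triangular matrix that is nonsingular by columns, let $C=[C_1,\dots,C_M]\cdot A$, let $1\le b\le n$, and set $d^*=\min\{(N-i+1)d_b(C_i)\mid i=1,\dots,M\}$. Then: (a) $d_b(C)\le\min\{N d_b(C_1),\,(N-i+1)d_b(C_i)+b-1 \mid i=2,\dots,M\}$. (b) If $d^*=N d_b(C_1)$, then $d_b(C)=d^*$. (c) Let $2\le i_0\le M$ satisfy $(N-i_0+1)d_b(C_{i_0})=d^*$. If there exist a codeword $\mathbf{c}_{i_0}\in C_{i_0}$ with $w_b(\mathbf{c}_{i_0})=d_b(C_{i_0})$ and a hole $H\in\mathbb{H}(\chi_1(\mathbf{c}_{i_0}))$ with $|H|\ge b-1$ and $\{1,n\}\cap H\ne\emptyset$, then $d_b(C)=d^*$.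
   Context: For a vector of length $L$, indices are cyclic mod $L$; $\chi_b(\mathbf{x})=\{i\in\{1,\dots,L\}:(x_i,\dots,x_{i+b-1})\ne\mathbf{0}\}$ (indices mod $L$), $w_b(\mathbf{x})=|\chi_b(\mathbf{x})|$, and for a linear code $C$, $d_b(C)=\min_{\mathbf{0}\ne\mathbf{c}\in C}w_b(\mathbf{c})$. For $J\subseteq\mathbb{Z}_n=\{1,\dots,n\}$, a hole of $J$ of size $h\ge1$ is a set $H=\{a+1,\dots,a+h\}\subseteq\mathbb{Z}_n\setminus J$ (indices mod $n$) with $a,a+h+1\in J$; $\mathbb{H}(J)$ is the set of holes of $J$. Matrix product code: $[C_1,\dots,C_M]\cdot A=\{[\sum_\ell a_{\ell,1}\mathbf{c}_\ell,\dots,\sum_\ell a_{\ell,N}\mathbf{c}_\ell] : \mathbf{c}_\ell\in C_\ell\}\subseteq\mathbb{F}_q^{nN}$. $A$ is upper triangular if $a_{i,j}=0$ for $i>j$. $A$ is nonsingular by columns (NSC) if for all $1\le t\le M$ and $1\le j_1<\dots<j_t\le N$ the $t\times t$ submatrix formed by the first $t$ rows and columns $j_1,\dots,j_t$ is nonsingular. *)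

From HB Require Import structures.
From mathcomp Require Import all_boot all_order all_algebra.
Set Implicit Arguments. Unset Strict Implicit. Unset Printing Implicit Defensive.
Import GRing.Theory.
Local Open Scope ring_scope.

(* Positions of a vector of length L are 0-based: 'I_L = {0,..,L-1};
   paper position p (1-based) corresponds to p-1.  Cyclic indexing mod L. *)

Section Defs.
Variable F : finFieldType.

Definition chi (L b : nat) (x : 'rV[F]_L) : {set 'I_L} :=
  [set i : 'I_L | [exists k : 'I_b, [exists j : 'I_L,
      (val j == (val i + val k) %% L)%N && (x 0 j != 0)]]].

Definition wb (L b : nat) (x : 'rV[F]_L) : nat := #|chi b x|.

(* minimum b-symbol distance of a code (given as a predicate);
   the default L is never reached when the code is nonzero *)
Definition db (L b : nat) (C : {pred 'rV[F]_L}) : nat :=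
  \big[minn/L]_(c : 'rV[F]_L | (c \in C) && (c != 0)) wb b c.

Definition dbV (L b : nat) (C : {vspace 'rV[F]_L}) : nat :=
  db b [pred c | c \in C].

Definition concat (N n : nat) (B : 'M[F]_(N, n)) : 'rV[F]_(N * n) :=
  \row_(k < N * n) \sum_(i < N) \sum_(j < n)
     (if (val k == val i * n + val j)%N then B i j else 0).

(* matrix product code [C_1,...,C_M] . A :
   codewords [sum_l a_{l,1} c_l, ..., sum_l a_{l,N} c_l], c_l in C_l *)
Definition mpc (M N n : nat) (Cs : 'I_M -> {vspace 'rV[F]_n})
    (A : 'M[F]_(M, N)) : {pred 'rV[F]_(N * n)} :=
  [pred x | [exists X : 'M[F]_(M, n),
     [forall l : 'I_M, row l X \in Cs l] &&
     (x == concat (\matrix_(j < N, p < n) \sum_(l < M) A l j * X l p))]].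

Definition upper_tri (M N : nat) (A : 'M[F]_(M, N)) : Prop :=
  forall (i : 'I_M) (j : 'I_N), (val j < val i)%N -> A i j = 0.

Definition NSC (M N : nat) (A : 'M[F]_(M, N)) : Prop :=
  forall (t : nat) (ht : (t <= M)%N), (1 <= t)%N ->
  forall f : 'I_t -> 'I_N, (forall k l : 'I_t, (val k < val l)%N -> (val (f k) < val (f l))%N) ->
  \det (\matrix_(k < t, l < t) A (widen_ord ht k) (f l)) != 0.

Definition is_hole (n : nat) (J H : {set 'I_n}) : Prop :=
  exists (a : 'I_n) (h : nat),
    [/\ (1 <= h)%N,
        H = [set i : 'I_n | [exists k : 'I_h.+1, (0 < val k)%N && (val i == (val a + val k) %% n)%N]],
        [disjoint H & J],
        a \in J &
        [exists j in J, val j == (val a + h + 1) %% n]%N].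

(* d^* = min_{i=1..M} (N-i+1) d_b(C_i) ; 0-based i : (N - i) *)
Definition dstar (M N n b : nat) (Cs : 'I_M -> {vspace 'rV[F]_n}) : nat :=
  \big[minn/(N * n)%N]_(i < M) ((N - val i) * dbV b (Cs i))%N.

End Defs.

From HB Require Import structures.
From mathcomp Require Import all_boot all_order all_algebra.
From mathcomp Require Import zify.
Set Implicit Arguments. Unset Strict Implicit. Unset Printing Implicit Defensive.
Import Order.TTheory GRing.Theory.
Local Open Scope ring_scope.

(* Write a codeword as [[sum_l a_(l,j) c_l]_j] and let [t] be the last index with
   [c_t <> 0].  For every window of [c_t], the NSC property makes the matching
   window nonzero in at least [N - t] of the [N] blocks, whence [d^* <= d_b(C)].
   Conversely, the codeword built from a single minimum weight word [c] of [C_i]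
   is [c] scaled by [a_(i,j)] in block [j], which vanishes for [j < i].  Its
   b-symbol support is [N - i] copies of that of [c], up to the windows crossing
   a block boundary: the last block loses those wrapping into block [0], while
   block [i - 1] gains at most [b - 1] windows wrapping into block [i].  Under
   the hole hypothesis no window of [c] can be of both kinds, so gains and losses
   cancel. *)

Definition cyc L (i : 'I_L) (k : nat) : 'I_L :=
  Ordinal (ltn_pmod (i + k) (leq_ltn_trans (leq0n i) (ltn_ord i))).

Lemma cyc0 L (i : 'I_L) : cyc i 0 = i.
Proof. by apply: val_inj; rewrite /= addn0 modn_small. Qed.

Section BSymbolWeight.

Variable F : finFieldType.

Lemma mem_chi L b (x : 'rV[F]_L) i : (i \in chi b x) = [exists k : 'I_b, x 0 (cyc i k) != 0].
Proof.
rewrite inE; apply: eq_existsb => k; apply/existsP/idP => [[j /andP[/eqP ej xj]]|xk].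
  by have -> : cyc i k = j by apply: val_inj.
by exists (cyc i k); rewrite eqxx.
Qed.

Lemma chi_window L b (x : 'rV[F]_L) i k : (k < b)%N -> x 0 (cyc i k) != 0 -> i \in chi b x.
Proof. by move=> kb xk; rewrite mem_chi; apply/existsP; exists (Ordinal kb). Qed.

Lemma chi1E L (x : 'rV[F]_L) i : (i \in chi 1 x) = (x 0 i != 0).
Proof.
rewrite mem_chi; apply/existsP/idP => [[k]|xi]; last by exists ord0; rewrite cyc0.
by rewrite ord1 cyc0.
Qed.

Lemma wb_le_len L b (x : 'rV[F]_L) : (wb b x <= L)%N.
Proof. by rewrite /wb -[X in (_ <= X)%N]card_ord max_card. Qed.

Lemma wb0 L b : wb b (0 : 'rV[F]_L) = 0%N.
Proof.
apply/eqP; rewrite cards_eq0; apply/eqP/setP => i.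
by rewrite mem_chi in_set0; apply/existsP => -[k]; rewrite mxE eqxx.
Qed.

Lemma wb_gt0 L b (x : 'rV[F]_L) : (0 < b)%N -> x != 0 -> (0 < wb b x)%N.
Proof.
move=> b0 /eqP xn0; have [j xj] : exists j, x 0 j != 0.
  apply/existsP; apply: contra_notT xn0; rewrite negb_exists => /forallP x0.
  by apply/rowP => j; rewrite mxE; apply/eqP/negbNE.
rewrite /wb card_gt0; apply/set0Pn; exists j.
by apply: (chi_window (k := 0)); rewrite ?cyc0.
Qed.

Lemma db_le L b (C : {pred 'rV[F]_L}) c : c \in C -> c != 0 -> (db b C <= wb b c)%N.
Proof. by move=> cC c0; apply: (@bigmin_le_cond _ nat); rewrite cC. Qed.

Lemma dbV_attained L b (C : {vspace 'rV[F]_L}) : C != 0%VS ->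
  exists c, [/\ c \in C, c != 0 & wb b c = dbV b C].
Proof.
move=> C0; pose P x := (x \in [pred c | c \in C]) && (x != 0).
have P0 : P (vpick C) by rewrite /P inE memv_pick vpick0 C0.
have [c /andP[cC c0] e] := @eq_bigmin _ nat _ L _ P (wb b) P0 (fun x _ => wb_le_len b x).
by exists c; split => //; exact: esym e.
Qed.

Lemma dbV_gt0 L b (C : {vspace 'rV[F]_L}) : (0 < b)%N -> C != 0%VS -> (0 < dbV b C)%N.
Proof. by move=> b0 /(dbV_attained b)[c [_ c0 <-]]; exact: wb_gt0. Qed.

End BSymbolWeight.

Section Blocks.

Variables N n : nat.

Lemma blk_subproof (s : 'I_(N * n)) : (s %/ n < N)%N.
Proof. by rewrite ltn_divLR ?ltn_ord //; case: n s => [|//] [s]; rewrite muln0. Qed.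

Lemma pos_subproof (s : 'I_(N * n)) : (s %% n < n)%N.
Proof. by rewrite ltn_mod; case: n s => [|//] [s]; rewrite muln0. Qed.

Definition blk (s : 'I_(N * n)) : 'I_N := Ordinal (blk_subproof s).
Definition pos (s : 'I_(N * n)) : 'I_n := Ordinal (pos_subproof s).

Lemma flat_subproof (j : 'I_N) (p : 'I_n) : (j * n + p < N * n)%N.
Proof.
apply: (@leq_trans (j.+1 * n)); first by rewrite mulSn addnC ltn_add2r.
by rewrite leq_mul2r ltn_ord orbT.
Qed.

Definition flat (j : 'I_N) (p : 'I_n) : 'I_(N * n) := Ordinal (flat_subproof j p).

Lemma blk_posE (s : 'I_(N * n)) a q : (q < n)%N -> val s = (a * n + q)%N ->
  val (blk s) = a /\ val (pos s) = q.
Proof.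
move=> qn e; have n0 : (0 < n)%N by apply: leq_ltn_trans qn.
by rewrite /= e divnMDl // divn_small // addn0 modnMDl modn_small.
Qed.

Lemma blk_flat j p : blk (flat j p) = j.
Proof. by apply: val_inj; case: (@blk_posE (flat j p) _ _ (ltn_ord p) erefl). Qed.

Lemma pos_flat j p : pos (flat j p) = p.
Proof. by apply: val_inj; case: (@blk_posE (flat j p) _ _ (ltn_ord p) erefl). Qed.

Lemma flat_blk_pos s : flat (blk s) (pos s) = s.
Proof. by apply: val_inj; rewrite /= -divn_eq. Qed.

Lemma modn_mulD a q : (0 < N)%N -> (q < n)%N ->
  ((a * n + q) %% (N * n) = (a %% N) * n + q)%N.
Proof.
move=> N0 qn; rewrite {1}(divn_eq a N) mulnDl -mulnA -addnA modnMDl modn_small //.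
apply: (@leq_trans ((a %% N).+1 * n)); first by rewrite mulSn addnC ltn_add2r.
by rewrite leq_mul2r ltn_mod N0 orbT.
Qed.

Lemma cyc_flatE j p k :
  val (cyc (flat j p) k) = (((j + (p + k) %/ n) %% N) * n + (p + k) %% n)%N.
Proof.
have N0 : (0 < N)%N by apply: leq_ltn_trans (ltn_ord j).
have n0 : (0 < n)%N by apply: leq_ltn_trans (ltn_ord p).
by rewrite /= -addnA {1}(divn_eq (p + k) n) addnA -mulnDl modn_mulD // ltn_mod.
Qed.

Lemma blk_cyc_flat j p k : val (blk (cyc (flat j p) k)) = ((j + (p + k) %/ n) %% N)%N.
Proof.
have n0 : (0 < n)%N by apply: leq_ltn_trans (ltn_ord p).
exact: (proj1 (blk_posE (ltn_pmod (p + k) n0) (cyc_flatE j p k))).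
Qed.

Lemma pos_cyc_flat j p k : pos (cyc (flat j p) k) = cyc p k.
Proof.
have n0 : (0 < n)%N by apply: leq_ltn_trans (ltn_ord p).
exact/val_inj/(proj2 (blk_posE (ltn_pmod (p + k) n0) (cyc_flatE j p k))).
Qed.

Lemma wb_blocks (F : finFieldType) b (x : 'rV[F]_(N * n)) :
  wb b x = #|[set (blk s, pos s) | s in chi b x]|.
Proof.
rewrite /wb card_in_imset // => s1 s2 _ _ e.
by case: e => e1 e2; rewrite -[s1]flat_blk_pos -[s2]flat_blk_pos; congr flat; apply: val_inj.
Qed.

Lemma concatE (F : finFieldType) (B : 'M[F]_(N, n)) s : concat B 0 s = B (blk s) (pos s).
Proof.
have key (j : 'I_N) (p : 'I_n) : (val s == j * n + p)%N = (j == blk s) && (p == pos s).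
  apply/eqP/andP => [e|[/eqP-> /eqP->]]; last by rewrite -divn_eq.
  by case: (blk_posE (ltn_ord p) e) => /val_inj<- /val_inj<-; rewrite !eqxx.
rewrite mxE; under eq_bigr => j _ do under eq_bigr => p _ do rewrite key.
rewrite (bigD1 (blk s)) //= (bigD1 (pos s)) //= !eqxx /=.
rewrite big1 => [|p /negbTE pn]; last by rewrite pn.
rewrite big1 => [|j /negbTE jn]; first by rewrite !addr0.
by apply: big1 => p _; rewrite jn.
Qed.

End Blocks.

Section MatrixProductCode.

Variables (F : finFieldType) (M N n : nat) (A : 'M[F]_(M, N)).

(* Were [t + 1] entries of [v A] zero, the first [t + 1] coordinates of [v] would
   form a nonzero vector in the left kernel of the corresponding NSC minor. *)
Lemma NSC_card_nz_comb (v : 'I_M -> F) (t : 'I_M) :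
  NSC A -> v t != 0 -> (forall l : 'I_M, (t < l)%N -> v l = 0) ->
  (N - t <= #|[set j : 'I_N | (\sum_(l < M) A l j * v l != 0)%R]|)%N.
Proof.
move=> hN vt vz; set Z := [set j : 'I_N | \sum_(l < M) A l j * v l == 0].
have -> : [set j : 'I_N | \sum_(l < M) A l j * v l != 0] = ~: Z.
  by apply/setP => j; rewrite !inE.
rewrite cardsCs setCK card_ord leq_sub2l //; rewrite leqNgt; apply/negP => tZ.
have ht : (t.+1 <= M)%N := ltn_ord t.
have [j0 _] : exists j0, j0 \in Z by apply/set0Pn; rewrite -card_gt0 (leq_ltn_trans _ tZ).
have ltI_trans : transitive (fun a b : 'I_N => (a < b)%N) by move=> ? ? ?; exact: ltn_trans.
have srt : sorted (fun a b : 'I_N => (a < b)%N) (enum Z).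
  rewrite /enum_mem -enumT; apply: sorted_filter => //.
  by have := iota_ltn_sorted 0 N; rewrite -val_enum_ord sorted_map.
have lt_sz (k : 'I_t.+1) : (k < size (enum Z))%N by rewrite -cardE (leq_trans _ tZ).
pose f (k : 'I_t.+1) := nth j0 (enum Z) k.
have finc (k l : 'I_t.+1) : (k < l)%N -> (f k < f l)%N.
  by move=> kl; apply: (sorted_ltn_nth ltI_trans j0 srt); rewrite ?inE ?lt_sz.
pose S := \matrix_(k < t.+1, l < t.+1) A (widen_ord ht k) (f l).
pose w : 'rV[F]_t.+1 := \row_k v (widen_ord ht k).
have wS : w *m S = 0.
  apply/rowP => l; rewrite !mxE.
  have /[!inE] /eqP fZ : f l \in Z by rewrite -mem_enum mem_nth.
  rewrite -[RHS]fZ [RHS](bigID (fun i : 'I_M => (i < t.+1)%N)) /=.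
  rewrite [X in _ = _ + X]big1 ?addr0.
    by rewrite (big_ord_narrow ht); apply: eq_bigr => k _; rewrite !mxE mulrC.
  by move=> i; rewrite -leqNgt => ti; rewrite vz ?mulr0.
have uS : S \in unitmx by rewrite unitmxE unitfE; exact: hN.
have /rowP /(_ ord_max) : w = 0 by rewrite -(mulmxK uS w) wS mul0mx.
rewrite !mxE; have -> : widen_ord ht ord_max = t by apply: val_inj.
by move/eqP; rewrite (negbTE vt).
Qed.

Definition mpc_word (X : 'M[F]_(M, n)) : 'rV[F]_(N * n) :=
  concat (\matrix_(j < N, p < n) \sum_(l < M) A l j * X l p).

Lemma mpc_wordE X s : mpc_word X 0 s = \sum_(l < M) A l (blk s) * X l (pos s).
Proof. by rewrite concatE mxE. Qed.

Lemma mpc_word0 : mpc_word 0 = 0.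
Proof. by apply/rowP => s; rewrite mpc_wordE mxE big1 // => l _; rewrite mxE mulr0. Qed.

Lemma card_window_blocks (X : 'M[F]_(M, n)) (t : 'I_M) (p : 'I_n) k :
  NSC A -> X t (cyc p k) != 0 -> (forall l : 'I_M, (t < l)%N -> X l (cyc p k) = 0) ->
  (N - t <= #|[set j : 'I_N | (mpc_word X 0 (cyc (flat j p) k) != 0)%R]|)%N.
Proof.
move=> hN Xt Xl; pose shift (j : 'I_N) := blk (cyc (flat j p) k).
have shift_inj : injective shift.
  move=> j1 j2 /(congr1 val); rewrite !blk_cyc_flat => /eqP.
  by rewrite eqn_modDr !modn_small // => /eqP/val_inj.
have -> : [set j | mpc_word X 0 (cyc (flat j p) k) != 0] =
    shift @^-1: [set j | \sum_(l < M) A l j * X l (cyc p k) != 0].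
  by apply/setP => j; rewrite !inE mpc_wordE pos_cyc_flat.
by rewrite card_preimset //; apply: NSC_card_nz_comb.
Qed.

Lemma wb_mpc_word_ge b (X : 'M[F]_(M, n)) (t : 'I_M) :
  NSC A -> (forall l : 'I_M, (t < l)%N -> row l X = 0) ->
  ((N - t) * wb b (row t X) <= wb b (mpc_word X))%N.
Proof.
move=> hN Xl; set c := row t X; set x := mpc_word X.
pose kp p := [pick k : 'I_b | c 0 (cyc p k) != 0].
pose S p := if kp p is Some k then [set j | x 0 (cyc (flat j p) k) != 0] else set0.
have S_chi p j : j \in S p -> flat j p \in chi b x.
  by rewrite /S; case: (kp p) => [k|]; rewrite inE // => /chi_window; apply.
have card_S p : p \in chi b c -> (N - t <= #|S p|)%N.
  rewrite mem_chi => /existsP[k0 ck0]; rewrite /S /kp.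
  case: pickP => [k ck|/(_ k0)/negbT]; last by rewrite ck0.
  apply: card_window_blocks => //; first by move: ck; rewrite mxE.
  by move=> l tl; have /rowP/(_ (cyc p k)) := Xl l tl; rewrite !mxE.
pose P := [set pj : 'I_n * 'I_N | (pj.1 \in chi b c) && (pj.2 \in S pj.1)].
have card_P : #|P| = (\sum_(p in chi b c) #|S p|)%N.
  rewrite -sum1_card; under [RHS]eq_bigr => p _ do rewrite -sum1_card.
  by rewrite pair_big_dep; apply: eq_bigl => pj; rewrite inE.
have P_chi : [set flat pj.2 pj.1 | pj in P] \subset chi b x.
  by apply/subsetP => y /imsetP[pj]; rewrite inE => /andP[_ /S_chi ?] ->.
have flat_inj : {in P &, injective (fun pj : 'I_n * 'I_N => flat pj.2 pj.1)}.
  move=> [p1 j1] [p2 j2] _ _ /= e.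
  have := congr1 (@pos _ _) e; have := congr1 (@blk _ _) e.
  by rewrite !blk_flat !pos_flat => -> ->.
rewrite /wb mulnC; apply: leq_trans (subset_leq_card P_chi).
rewrite card_in_imset // card_P -sum_nat_const; exact: leq_sum.
Qed.

End MatrixProductCode.

Lemma card_ord_interval N lo hi : (#|[set j : 'I_N | lo <= j < hi]| <= hi - lo)%N.
Proof.
rewrite cardE -(size_map val) -[(hi - lo)%N](size_iota lo) uniq_leq_size //.
  by rewrite map_inj_uniq ?enum_uniq //; exact: val_inj.
by move=> y /mapP[j]; rewrite mem_enum inE mem_iota => /andP[lj jh] ->; rewrite lj /=; lia.
Qed.

Section Windows.

Variables (F : finFieldType) (n b : nat).
Implicit Types (c : 'rV[F]_n).

Definition chi_nowrap c : {set 'I_n} :=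
  [set p : 'I_n | [exists k : 'I_b, (p + k < n)%N && (c 0 (cyc p k) != 0)]].

Definition chi_wrap c : {set 'I_n} :=
  [set p : 'I_n | [exists k : 'I_b, (n <= p + k)%N && (c 0 (cyc p k) != 0)]].

Lemma chi_nowrapUwrap c : chi b c = chi_nowrap c :|: chi_wrap c.
Proof.
apply/setP => p; rewrite mem_chi !inE.
apply/existsP/orP => [[k ck]|[]/existsP[k /andP[_ ck]]]; try by exists k.
by case: (ltnP (p + k) n) => pk; [left | right]; apply/existsP; exists k; rewrite pk.
Qed.

Lemma card_chi_wrap_le c : (b <= n)%N -> (#|chi_wrap c| <= b - 1)%N.
Proof.
move=> bn; have sub : chi_wrap c \subset [set p : 'I_n | ((n - b).+1 <= p < n)%N].
  apply/subsetP => p /[!inE] /existsP[k /andP[nk _]].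
  by rewrite ltn_ord andbT; have := ltn_ord k; lia.
apply: leq_trans (subset_leq_card sub) (leq_trans (card_ord_interval _ _ _) _); lia.
Qed.

End Windows.

Lemma is_holeP n (J H : {set 'I_n}) : is_hole J H ->
  exists (a : 'I_n) h, [/\ (h < n)%N, (#|H| <= h)%N, [disjoint H & J],
    forall (y : 'I_n) k, (0 < k <= h)%N -> y = ((a + k) %% n)%N :> nat -> y \in H &
    forall y, y \in H -> exists2 k, (0 < k <= h)%N & y = ((a + k) %% n)%N :> nat].
Proof.
move=> [a [h [h1 eH dis aJ _]]]; have n0 : (0 < n)%N by apply: leq_ltn_trans (ltn_ord a).
have memH (y : 'I_n) k : (0 < k <= h)%N -> y = ((a + k) %% n)%N :> nat -> y \in H.
  move=> /andP[k0 kh] ey; rewrite eH inE; apply/existsP.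
  by exists (Ordinal (kh : k < h.+1)%N); rewrite /= k0 ey eqxx.
have H_mem y : y \in H -> exists2 k, (0 < k <= h)%N & y = ((a + k) %% n)%N :> nat.
  rewrite eH inE => /existsP[k /andP[k0 /eqP ey]].
  by exists k; rewrite ?k0 ?(ltn_ord k : k <= h)%N.
exists a, h; split => //.
  rewrite ltnNge; apply/negP => nh.
  have aH : a \in H by apply: (memH a n); rewrite ?n0 ?nh // modnDr modn_small.
  by move: (disjointFr dis aH); rewrite aJ.
pose f (k : 'I_h.+1) : 'I_n := Ordinal (ltn_pmod (a + k) n0).
have sub : H \subset f @: [set~ ord0].
  apply/subsetP => y /H_mem[k /andP[k0 kh] ey]; apply/imsetP.
  exists (Ordinal (kh : k < h.+1)%N); last exact: val_inj.
  by rewrite !inE; apply: contraTneq k0 => -[->].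
apply: leq_trans (subset_leq_card sub) (leq_trans (leq_imset_card _ _) _).
by rewrite cardsC1 card_ord.
Qed.

Section HoleWindows.

Variables (F : finFieldType) (n b : nat) (c : 'rV[F]_n) (H : {set 'I_n}).
Hypotheses (hH : is_hole (chi 1 c) H) (cardH : (b - 1 <= #|H|)%N)
  (H_end : [exists i in H, (val i == 0)%N || (val i == n.-1)%N]).

(* [H] is a run of at least [b - 1] zeros through the end of [c], so two nonzero
   entries cannot lie fewer than [b - 1] steps apart across the end. *)
Lemma hole_wrap_gap (u v : 'I_n) :
  c 0 u != 0 -> c 0 v != 0 -> (u + n <= v + b - 1)%N -> False.
Proof.
move=> cu cv uv; have [a [h [hn cardHh dis memH H_mem]]] := is_holeP hH.
have notH y : c 0 y != 0 -> y \notin H by rewrite -chi1E => /(disjointFl dis) ->.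
move: H_end => /existsP[z /andP[zH z_end]]; have [k /andP[k0 kh] ez] := H_mem z zH.
have {}z_end : (z == 0%N :> nat) || (z == n.-1 :> nat) := z_end.
have zu : z != u :> nat by apply: contraNneq (notH u cu) => /val_inj <-.
have zv : z != v :> nat by apply: contraNneq (notH v cv) => /val_inj <-.
have vout : ~~ (a < v <= a + h)%N.
  apply: contraNN (notH v cv) => /andP[av vah]; apply: (memH v (v - a)%N); first lia.
  by rewrite subnKC ?(ltnW av) // modn_small.
have uout : ~~ (a < u + n <= a + h)%N.
  apply: contraNN (notH u cu) => /andP[au uah]; apply: (memH u (u + n - a)%N); first lia.
  by rewrite subnKC ?(ltnW au) // modnDr modn_small.
have an := ltn_ord a; have un := ltn_ord u; have vn := ltn_ord v; have zn := ltn_ord z.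
case: (ltnP (a + k) n) => akn; move: ez.
  by rewrite modn_small //; move: z_end zu zv vout uout; lia.
rewrite -[(a + k)%N](subnK akn) modnDr modn_small; last lia.
by move: z_end zu zv vout uout; lia.
Qed.

Lemma hole_disjoint_chi_wrap : (b <= n)%N -> [disjoint chi_nowrap b c & chi_wrap b c].
Proof.
move=> bn; apply/pred0P => p /=; apply/negP => /andP[].
rewrite !inE => /existsP[k1 /andP[pk1 c1]] /existsP[k2 /andP[pk2 c2]].
apply: (hole_wrap_gap c2 c1).
rewrite /= [X in (_ <= X + _ - _)%N]modn_small //.
rewrite -[(p + k2)%N](subnK pk2) modnDr modn_small; last first.
  by have := ltn_ord k2; have := ltn_ord p; lia.
by have := ltn_ord k1; have := ltn_ord k2; lia.
Qed.

End HoleWindows.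

Section SingleRow.

Variables (F : finFieldType) (M N n : nat) (A : 'M[F]_(M, N)).

Definition single_row (i : 'I_M) (c : 'rV[F]_n) : 'M[F]_(M, n) :=
  \matrix_(l, p) if l == i then c 0 p else 0.

Lemma row_single_row i c l : row l (single_row i c) = if l == i then c else 0.
Proof. by apply/rowP => p; rewrite !mxE; case: eqP; rewrite ?mxE. Qed.

Lemma mpc_word_single_row i c s :
  mpc_word A (single_row i c) 0 s = A i (blk s) * c 0 (pos s).
Proof.
rewrite mpc_wordE (bigD1 i) //= big1 ?addr0 => [|l /negbTE li]; first by rewrite mxE eqxx.
by rewrite mxE li mulr0.
Qed.

Lemma mpc_single_row_mem (Cs : 'I_M -> {vspace 'rV[F]_n}) i c :
  c \in Cs i -> mpc_word A (single_row i c) \in mpc Cs A.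
Proof.
move=> ci; rewrite inE; apply/existsP; exists (single_row i c); rewrite eqxx andbT.
by apply/forallP => l; rewrite row_single_row; case: eqP => [->|_]; rewrite ?mem0v.
Qed.

Lemma wb_mpc_single_row_ge b (i : 'I_M) (c : 'rV[F]_n) :
  NSC A -> ((N - i) * wb b c <= wb b (mpc_word A (single_row i c)))%N.
Proof.
move=> hN; have := wb_mpc_word_ge b hN (X := single_row i c) (t := i).
rewrite row_single_row eqxx; apply=> l il; rewrite row_single_row.
by case: eqP il => // ->; rewrite ltnn.
Qed.

Lemma mpc_single_row_neq0 b (i : 'I_M) (c : 'rV[F]_n) :
  (i < N)%N -> (0 < b)%N -> NSC A -> c != 0 -> mpc_word A (single_row i c) != 0.
Proof.
move=> iN b0 hN c0; apply: contraTneq (wb_mpc_single_row_ge b i c hN) => ->.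
by rewrite wb0 -ltnNge muln_gt0 subn_gt0 iN wb_gt0.
Qed.

Hypothesis hUT : upper_tri A.

Lemma chi_mpc_single_row b (i : 'I_M) (c : 'rV[F]_n) s : (b <= n)%N ->
  s \in chi b (mpc_word A (single_row i c)) ->
  (pos s \in chi_nowrap b c /\ (i <= blk s)%N) \/
  (pos s \in chi_wrap b c /\ (i <= (blk s).+1 %% N)%N).
Proof.
move=> bn; rewrite mem_chi => /existsP[k]; rewrite -[s]flat_blk_pos mpc_word_single_row.
rewrite pos_cyc_flat blk_flat pos_flat mulf_eq0 negb_or => /andP[Ai ck].
have ij : (i <= blk (cyc (flat (blk s) (pos s)) k))%N.
  by rewrite leqNgt; apply: contraNN Ai => /hUT ->.
rewrite blk_cyc_flat in ij.
have N0 : (0 < N)%N := leq_ltn_trans (leq0n _) (ltn_ord (blk s)).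
have := ltn_ord (pos s); have := ltn_ord k; case: (ltnP (pos s + k) n) => pk pn kb.
  left; rewrite divn_small // addn0 modn_small // in ij; split => //.
  by rewrite inE; apply/existsP; exists k; rewrite pk.
have pk1 : ((pos s + k) %/ n = 1)%N.
  by apply/eqP; rewrite eqn_leq -ltnS ltn_divLR ?leq_divRL; lia.
right; rewrite pk1 addn1 in ij; split => //.
by rewrite inE; apply/existsP; exists k; rewrite pk.
Qed.

Lemma wb_mpc_single_row_le b (i : 'I_M) (c : 'rV[F]_n) : (b <= n)%N ->
  (wb b (mpc_word A (single_row i c)) <= N * wb b c)%N.
Proof.
move=> bn; rewrite wb_blocks.
have sub : [set (blk s, pos s) | s in chi b (mpc_word A (single_row i c))]
    \subset setX [set: 'I_N] (chi b c).
  apply/subsetP => y /imsetP[s hs ->]; rewrite inE /= chi_nowrapUwrap in_setU.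
  by case: (chi_mpc_single_row bn hs) => -[->] _; rewrite in_setT ?orbT.
by apply: leq_trans (subset_leq_card sub) _; rewrite cardsX cardsT card_ord.
Qed.

(* Blocks [i .. N-2] carry full copies of [chi b c], block [N-1] only its
   non-wrapping windows and block [i-1] only the windows wrapping into block [i]. *)
Lemma wb_mpc_single_row_le_split b (i : 'I_M) (c : 'rV[F]_n) :
  (b <= n)%N -> (0 < i)%N -> (i < N)%N ->
  (wb b (mpc_word A (single_row i c)) <=
     (N - i).-1 * wb b c + #|chi_nowrap b c| + #|chi_wrap b c|)%N.
Proof.
move=> bn i0 iN; rewrite wb_blocks.
set D1 := setX [set j : 'I_N | (i <= j < N.-1)%N] (chi b c).
set D2 := setX [set j : 'I_N | (N.-1 <= j < N)%N] (chi_nowrap b c).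
set D3 := setX [set j : 'I_N | (i.-1 <= j < i)%N] (chi_wrap b c).
have sub : [set (blk s, pos s) | s in chi b (mpc_word A (single_row i c))]
    \subset D1 :|: D2 :|: D3.
  apply/subsetP => y /imsetP[s hs ->]; have jN := ltn_ord (blk s).
  have mem_int lo hi (j : 'I_N) :
    (j \in [set j : 'I_N | (lo <= j < hi)%N]) = (lo <= j < hi)%N by rewrite inE.
  rewrite /D1 /D2 /D3 !in_setU !in_setX !mem_int chi_nowrapUwrap in_setU.
  case: (chi_mpc_single_row bn hs) => -[-> ij] /=; rewrite ?andbT ?orbT.
    by case: (ltnP (blk s) N.-1) => jN1; rewrite ?ij ?jN1 ?jN ?orbT.
  have jN' : ((blk s).+1 < N)%N.
    by rewrite ltn_neqAle jN andbT; apply: contraTneq ij => ->; rewrite modnn -ltnNge.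
  rewrite modn_small // in ij; case: (leqP i (blk s)) => ij'.
    by rewrite (_ : blk s < N.-1)%N //; lia.
  by rewrite (_ : i.-1 <= blk s)%N ?orbT //; lia.
apply: leq_trans (subset_leq_card sub) _.
rewrite /D1 /D2 /D3; apply: leq_trans (leq_card_setU _ _) _; rewrite cardsX.
apply: leq_add.
  apply: leq_trans (leq_card_setU _ _) _; rewrite !cardsX.
  apply: leq_add; last rewrite -[X in (_ <= X)%N]mul1n; apply: leq_mul => //;
    by apply: leq_trans (card_ord_interval _ _ _) _; lia.
rewrite -[X in (_ <= X)%N]mul1n; apply: leq_mul => //.
by apply: leq_trans (card_ord_interval _ _ _) _; lia.
Qed.

Lemma wb_mpc_single_row_le_wrap b (i : 'I_M) (c : 'rV[F]_n) :
  (b <= n)%N -> (0 < b)%N -> (0 < i)%N -> (i < N)%N ->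
  (wb b (mpc_word A (single_row i c)) <= (N - i) * wb b c + b - 1)%N.
Proof.
move=> bn b0 i0 iN; apply: leq_trans (wb_mpc_single_row_le_split c bn i0 iN) _.
have nowrap_le : (#|chi_nowrap b c| <= wb b c)%N.
  by apply/subset_leq_card; rewrite chi_nowrapUwrap subsetUl.
have [k ->] : exists k, (N - i = k.+1)%N by exists (N - i).-1; lia.
by move: nowrap_le (card_chi_wrap_le c bn); rewrite mulSn /=; set w := wb b c; lia.
Qed.

Lemma wb_mpc_single_row_le_hole b (i : 'I_M) (c : 'rV[F]_n) (H : {set 'I_n}) :
  (b <= n)%N -> (0 < i)%N -> (i < N)%N -> is_hole (chi 1 c) H -> (b - 1 <= #|H|)%N ->
  [exists p in H, (val p == 0)%N || (val p == n.-1)%N] ->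
  (wb b (mpc_word A (single_row i c)) <= (N - i) * wb b c)%N.
Proof.
move=> bn i0 iN hH cardH H_end.
apply: leq_trans (wb_mpc_single_row_le_split c bn i0 iN) _.
have : wb b c = (#|chi_nowrap b c| + #|chi_wrap b c|)%N.
  rewrite /wb chi_nowrapUwrap cardsU.
  by rewrite (disjoint_setI0 (hole_disjoint_chi_wrap hH cardH H_end bn)) cards0 subn0.
have [k ->] : exists k, (N - i = k.+1)%N by exists (N - i).-1; lia.
by rewrite mulSn /= => ->; lia.
Qed.

End SingleRow.

Lemma dstar_le_db (F : finFieldType) M N n b (Cs : 'I_M -> {vspace 'rV[F]_n})
    (A : 'M[F]_(M, N)) :
  NSC A -> (dstar N b Cs <= db b (mpc Cs A))%N.
Proof.
move=> hN; apply/(@bigmin_geP _ nat); split; first exact: (@bigmin_le_id _ nat).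
move=> _ /andP[/existsP[X /andP[/forallP XC /eqP ->]]]; rewrite -/(mpc_word A X) => x0.
have [t0 Xt0] : exists t, row t X != 0.
  apply/existsP; apply: contraNT x0; rewrite negb_exists => /forallP X0.
  suff -> : X = 0 by rewrite mpc_word0.
  by apply/row_matrixP => l; rewrite row0; apply/eqP/negbNE/X0.
have [t Xt tmax] := @arg_maxnP _ t0 (fun l => row l X != 0) val Xt0.
have Xl (l : 'I_M) : (t < l)%N -> row l X = 0.
  by move=> tl; apply/eqP/negbNE; apply: contraTN tl => /tmax; rewrite -leqNgt.
apply: leq_trans (wb_mpc_word_ge b hN Xl).
apply: leq_trans (@bigmin_le _ nat _ _ t _) _.
by rewrite leq_mul2l (db_le b (XC t) Xt) orbT.
Qed.

Theorem mainTheorem5 (F : finFieldType) (M N n b : nat)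
  (Cs : 'I_M -> {vspace 'rV[F]_n}) (A : 'M[F]_(M, N))
  (hM : (0 < M)%N) (hMN : (M <= N)%N)
  (hCs : forall i : 'I_M, Cs i != 0%VS)
  (hUT : upper_tri A) (hNSC : NSC A)
  (hb1 : (1 <= b)%N) (hbn : (b <= n)%N) :
  let C := mpc Cs A in
  let C1 := Cs (Ordinal hM) in
  let ds := dstar N b Cs in
  ((db b C <= N * dbV b C1)%N /\
   (forall i : 'I_M, (0 < val i)%N ->
      (db b C <= (N - val i) * dbV b (Cs i) + b - 1)%N))
  /\
  (ds = (N * dbV b C1)%N -> db b C = ds)
  /\
  (forall i0 : 'I_M, (0 < val i0)%N ->
     ((N - val i0) * dbV b (Cs i0))%N = ds ->
     (exists c : 'rV[F]_n,
        [/\ c \in Cs i0, wb b c = dbV b (Cs i0) &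
         exists H : {set 'I_n},
           [/\ is_hole (chi 1 c) H, (b - 1 <= #|H|)%N &
               [exists i in H, (val i == 0)%N || (val i == n.-1)%N]]]) ->
     db b C = ds).
Proof.
move=> C C1 ds.
have iN (i : 'I_M) : (i < N)%N := leq_trans (ltn_ord i) hMN.
have db_le_word i c : c \in Cs i -> c != 0 ->
    (db b C <= wb b (mpc_word A (single_row i c)))%N.
  move=> ci c0; apply: (db_le b (mpc_single_row_mem A ci)).
  exact: mpc_single_row_neq0 (iN i) hb1 hNSC c0.
have ds_le : (ds <= db b C)%N := dstar_le_db b Cs hNSC.
have a1 : (db b C <= N * dbV b C1)%N.
  have [c [ci c0 <-]] := dbV_attained b (hCs (Ordinal hM)).
  exact: leq_trans (db_le_word _ _ ci c0) (wb_mpc_single_row_le hUT _ c hbn).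
split; [split => // i i0 | split => [e | i0 i00 ei0 [c [ci ec [H [hH cardH H_end]]]]]].
- have [c [ci c0 <-]] := dbV_attained b (hCs i).
  apply: leq_trans (db_le_word _ _ ci c0) _.
  exact: (wb_mpc_single_row_le_wrap hUT c hbn hb1 i0 (iN i)).
- by apply/eqP; rewrite eqn_leq ds_le andbT e.
have c0 : c != 0 by apply: contraTneq (dbV_gt0 hb1 (hCs i0)) => c0; rewrite -ec c0 wb0.
apply/eqP; rewrite eqn_leq ds_le andbT -ei0 -ec.
exact: leq_trans (db_le_word _ _ ci c0)
  (wb_mpc_single_row_le_hole hUT hbn i00 (iN i0) hH cardH H_end).
Qed.
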